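(* Let $\tau\colon X\to B$ be a fibre bundle of simplicial sets whose base $B$ and whose fibre $F$ are partial groups (that is, reduced $N$-simplicial sets with inversion). Then the total space $X$ is again a partial group, i.e. a reduced $N$-simplicial set with inversion. In other words, the category of partial groups is closed under extensions (fibre bundles).
   Context: A simplicial set $X$ is reduced if $X_0$ is a single point $v$; its unit is $1_X=s_0(v)\in X_1$. The enumerating operator $E_n\colon X_n\to X_1\times\cdots\times X_1$ ($n$ factors) sends an $n$-simplex $\sigma\colon\Delta[n]\to X$ to the tuple of its edges $(\sigma|_{\{0,1\}},\sigma|_{\{1,2\}},\dots,\sigma|_{\{n-1,n\}})$. $X$ is an $N$-simplicial set if $E_n$ is injective for all $n\ge1$; a simplex with edges $x_1,\dots,x_n$ is then written $[x_1|\dots|x_n]$. The product operator $\Pi\colon X_n\to X_1$ sends $\sigma$ to its edge from vertex $0$ to vertex $n$. The opposite simplicial set $X^{op}$ has $X^{op}_n=X_n$, $d_i^{op}=d_{n-i}$, $s_i^{op}=s_{n-i}$. An inversion on a reduced $N$-simplicial set $X$ is a simplicial map $\nu\colon X\to X^{op}$ with $\nu\circ\nu=\mathrm{Id}$ such that for every $x\in X_n$ ($n\ge1$) the tuple $[\nu(x)|x]$ is a $2n$-simplex of $X$ with $\Pi([\nu(x)|x])=1_X$. A partial group is (identified with) a reduced $N$-simplicial set with inversion. A simplicial map $\tau\colon X\to B$ is a fibre bundle with fibre $F$ if $\tau$ is onto and for every simplex $b\colon\Delta[n]\to B$ there is an isomorphism $F\times\Delta[n]\cong X^b$ over $\Delta[n]$,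 where $X^b=\Delta[n]\times_B X$ is the pullback. *)

(* Simplicial sets are presented as contravariant functors on
   the simplex category Delta, whose arrows [m] -> [n] are the monotone maps
   'I_m.+1 -> 'I_n.+1. *)
From mathcomp Require Import all_boot.
Set Implicit Arguments. Unset Strict Implicit. Unset Printing Implicit Defensive.

Definition monob m n (f : {ffun 'I_m.+1 -> 'I_n.+1}) : bool :=
  [forall i : 'I_m.+1, forall j : 'I_m.+1, (i <= j) ==> (f i <= f j)].

Definition hom m n := {f : {ffun 'I_m.+1 -> 'I_n.+1} | monob f}.

Definition hfun m n (f : hom m n) : 'I_m.+1 -> 'I_n.+1 := fun i => sval f i.

Lemma monobP m n (f : {ffun 'I_m.+1 -> 'I_n.+1}) :
  (forall i j : 'I_m.+1, i <= j -> f i <= f j) -> monob f.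
Proof.
move=> H; apply/forallP=> i; apply/forallP=> j; apply/implyP; exact: H.
Qed.

Lemma hfun_mono m n (f : hom m n) (i j : 'I_m.+1) : i <= j -> hfun f i <= hfun f j.
Proof.
case: f => g /= Hg Hij; rewrite /hfun /=.
by move/forallP: Hg => /(_ i) /forallP /(_ j) /implyP; apply.
Qed.

Lemma idh_mono n : monob [ffun i : 'I_n.+1 => i].
Proof. by apply: monobP => i j; rewrite !ffunE. Qed.
Definition idh n : hom n n := exist (@monob _ _) _ (idh_mono n).

Lemma comph_mono m n p (g : hom n p) (f : hom m n) :
  monob [ffun i : 'I_m.+1 => hfun g (hfun f i)].
Proof. by apply: monobP => i j Hij; rewrite !ffunE; do 2 apply: hfun_mono. Qed.
Definition comph m n p (g : hom n p) (f : hom m n) : hom m p :=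
  exist (@monob _ _) _ (comph_mono g f).

Lemma revh_mono m n (f : hom m n) :
  monob [ffun i : 'I_m.+1 => rev_ord (hfun f (rev_ord i))].
Proof.
apply: monobP => i j Hij; rewrite !ffunE /=.
have H : rev_ord j <= rev_ord i by rewrite /= leq_sub2l // ltnS.
by rewrite leq_sub2l // ltnS; apply: hfun_mono.
Qed.
Definition revh m n (f : hom m n) : hom m n := exist (@monob _ _) _ (revh_mono f).

Lemma edgeh_mono n (i : 'I_n) : monob [ffun j : 'I_2 => (inord (i + j) : 'I_n.+1)].
Proof.
apply: monobP => j k Hjk; rewrite !ffunE !inordK ?leq_add2l //.
- by rewrite ltnS; case: k {Hjk} => [[|[|]]] //= _; rewrite ?addn0 ?addn1 // ltnW.
- by rewrite ltnS; case: j {Hjk} => [[|[|]]] //= _; rewrite ?addn0 ?addn1 // ltnW.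
Qed.
Definition edgeh n (i : 'I_n) : hom 1 n := exist (@monob _ _) _ (edgeh_mono i).

Lemma longh_mono n : monob [ffun j : 'I_2 => (inord (j * n) : 'I_n.+1)].
Proof.
have Hle (j : 'I_2) : j * n <= n.
  by case: j => [[|[|]]] //= _; rewrite ?mul0n ?mul1n.
apply: monobP => j k Hjk; rewrite !ffunE !inordK ?ltnS ?Hle ?leq_mul2r ?Hjk ?orbT //.
Qed.
Definition longh n : hom 1 n := exist (@monob _ _) _ (longh_mono n).

Lemma degh_mono : monob [ffun j : 'I_2 => (ord0 : 'I_1)].
Proof. by apply: monobP => j k _; rewrite !ffunE. Qed.
Definition degh : hom 1 0 := exist (@monob _ _) _ degh_mono.

Record sSet := SSet {
  sobj :> nat -> Type;
  sact : forall m n, hom m n -> sobj n -> sobj m;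
  sact_id : forall n (x : sobj n), sact (idh n) x = x;
  sact_comp : forall m n p (g : hom n p) (f : hom m n) (x : sobj p),
      sact f (sact g x) = sact (comph g f) x
}.

Definition is_smap (X Y : sSet) (g : forall n, X n -> Y n) : Prop :=
  forall m n (f : hom m n) (x : X n), g m (@sact X _ _ f x) = @sact Y _ _ f (g n x).

(* simplicial maps X -> Y^op; the opposite simplicial set Y^op has the same
   simplices and acts by f |-> revh f (so d_i^op = d_(n-i), s_i^op = s_(n-i)) *)
Definition is_smap_op (X Y : sSet) (g : forall n, X n -> Y n) : Prop :=
  forall m n (f : hom m n) (x : X n), g m (@sact X _ _ f x) = @sact Y _ _ (revh f) (g n x).

Definition reduced (X : sSet) : Prop := exists v : X 0, forall w : X 0, w = v.

Definition is_unit (X : sSet) (u : X 1) : Prop :=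
  exists v : X 0, (forall w : X 0, w = v) /\ u = @sact X _ _ degh v.

Definition enum_op (X : sSet) n (x : X n) : 'I_n -> X 1 :=
  fun i => @sact X _ _ (edgeh i) x.

Definition prod_op (X : sSet) n (x : X n) : X 1 := @sact X _ _ (longh n) x.

Definition N_simplicial (X : sSet) : Prop :=
  forall n, 0 < n -> forall x y : X n,
    (forall i : 'I_n, enum_op x i = enum_op y i) -> x = y.

(* the 2n-simplex [nu(x) | x]: its edge tuple is the concatenation *)
Definition concat_edges (X : sSet) n (a b : 'I_n -> X 1) (i : 'I_(n + n)) : X 1 :=
  match split i with inl j => a j | inr j => b j end.

Definition is_inversion (X : sSet) (nu : forall n, X n -> X n) : Prop :=
  [/\ is_smap_op nu,
      (forall n (x : X n), nu n (nu n x) = x) &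
      (forall n, 0 < n -> forall x : X n, exists w : X (n + n),
          (forall i, enum_op w i = concat_edges (enum_op (nu n x)) (enum_op x) i)
          /\ is_unit (prod_op w))].

Definition partial_group (X : sSet) : Prop :=
  [/\ reduced X, N_simplicial X & exists nu : forall n, X n -> X n, is_inversion nu].

(* Delta[n]_m = hom m n, acting by precomposition.  The pullback
   X^b = Delta[n] x_B X has m-simplices the pairs (f, x) with f : hom m n,
   x : X m, and @sact B _ _ f b = tau m x.  An isomorphism F x Delta[n] ~= X^b over
   Delta[n] is (unfolded) a family phi_m : F_m * Delta[n]_m -> X_m such that
   (y, f) |-> (f, phi_m (y, f)) lands in X^b, is natural in m, and is bijective
   onto (X^b)_m; being over Delta[n] means the Delta[n]-component is kept. *)
Definition trivialization (X B F : sSet) (tau : forall n, X n -> B n) n (b : B n)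
  (phi : forall m, F m -> hom m n -> X m) : Prop :=
  [/\ (forall m (y : F m) (f : hom m n), tau m (phi m y f) = @sact B _ _ f b),
      (forall k m (g : hom k m) (y : F m) (f : hom m n),
          phi k (@sact F _ _ g y) (comph f g) = @sact X _ _ g (phi m y f)) &
      (forall m (f : hom m n) (x : X m), tau m x = @sact B _ _ f b ->
          exists! y : F m, phi m y f = x)].

Definition fibre_bundle (X B F : sSet) (tau : forall n, X n -> B n) : Prop :=
  [/\ is_smap tau,
      (forall n (b : B n), exists x : X n, tau n x = b) &
      (forall n (b : B n), exists phi : forall m, F m -> hom m n -> X m, trivialization tau b phi)].

From mathcomp Require Import all_boot zify.
From Stdlib Require Import ClassicalEpsilon.
Set Implicit Arguments. Unset Strict Implicit. Unset Printing Implicit Defensive.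

(* In B an inverse of [tau x] comes with an inversion witness: a [2n]-simplex [[a | tau x]]
   all of whose middle edges [(n - k, n + k)] are units.  Trivializing the bundle over this
   witness, [x] lifts to the fibre, and the lift is extended to the left one vertex at a time,
   each new outermost middle edge being the fibre lift of a unit (using the inversion of F);
   the image of the result in X is an inversion witness for [x].  Its left half [a] is unique:
   in a partial group a [2n]-simplex is determined by its right half and its middle edges
   (right cancellation), which applies first in B and then, through the trivialization, in F.
   Uniqueness makes [x |-> a] a map to [X^op], and the involution law reduces to 1-simplices,
   where it follows from a lift to X of the 3-simplex [[nu b | b | nu b]]. *)


(** * Simplicial operators from monotone maps on [nat] *)

Definition homf m n (g : nat -> nat) :=
  (forall i j, i <= j -> j <= m -> g i <= g j) /\ g m <= n.

Ltac homf_lia :=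
  split; [let i := fresh "i" in let j := fresh "j" in move=> i j ? ?; lia | lia].

Ltac case_nat := repeat match goal with
  |- context [match ?t with 0 => _ | _.+1 => _ end] => let E := fresh "E" in case E: t => [|?]
  end.

Lemma homf_le m n g i : homf m n g -> i <= m -> g i <= n.
Proof. by move=> [Hg Hm] Hi; apply: leq_trans (Hg i m Hi (leqnn _)) Hm. Qed.

Lemma homf_comp m k n f g : homf m k f -> homf k n g -> homf m n (fun i => g (f i)).
Proof.
move=> [Hf Hfm] [Hg Hgk]; split; last exact: leq_trans (Hg _ _ Hfm (leqnn _)) Hgk.
move=> i j Hij Hj; apply: Hg; [exact: Hf | exact: leq_trans (Hf j m Hj (leqnn _)) Hfm].
Qed.

Lemma homf_const m n p : p <= n -> homf m n (fun _ => p).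
Proof. by []. Qed.

Lemma homf_rev m n g : homf m n g -> homf m n (fun i => n - g (m - i)).
Proof. by case=> Hg Hm; split=> [i j Hij Hj|]; [have := Hg (m - j) (m - i); lia | lia]. Qed.

Lemma homf_ext m n f f' : homf m n f -> (forall i, i <= m -> f i = f' i) -> homf m n f'.
Proof.
case=> Hf Hm E; split; last by rewrite -E.
by move=> i j Hij Hj; rewrite -!E //; [exact: Hf | exact: leq_trans Hj].
Qed.

Definition pt2 p q : nat -> nat := fun j => if j is 0 then p else q.
Definition pt3 p q r : nat -> nat := fun j => match j with 0 => p | 1 => q | _ => r end.
Definition pt4 p q r s : nat -> nat :=
  fun j => match j with 0 => p | 1 => q | 2 => r | _ => s end.

Lemma homf2 n p q : p <= q -> q <= n -> homf 1 n (pt2 p q).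
Proof. by move=> Hpq Hq; split=> // [[|i]] [|j]. Qed.

Lemma homf3 n p q r : p <= q -> q <= r -> r <= n -> homf 2 n (pt3 p q r).
Proof. by move=> *; split=> // [[|[|i]]] [|[|[|j]]] //= _ _; lia. Qed.

Lemma homf4 n p q r s : p <= q -> q <= r -> r <= s -> s <= n -> homf 3 n (pt4 p q r s).
Proof. by move=> *; split=> // [[|[|[|i]]]] [|[|[|[|j]]]] //= _ _; lia. Qed.

Lemma hom0_mono m n : monob [ffun _ : 'I_m.+1 => (ord0 : 'I_n.+1)].
Proof. by apply: monobP => i j _; rewrite !ffunE. Qed.
Definition hom0 m n : hom m n := exist (@monob _ _) _ (hom0_mono m n).

(* [hom0] is only the junk value for functions [g] that do not satisfy [homf m n g]. *)
Definition mkhom m n (g : nat -> nat) : hom m n :=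
  insubd (hom0 m n) [ffun i : 'I_m.+1 => (inord (g i) : 'I_n.+1)].

Lemma mkhom_mono m n g : homf m n g -> monob [ffun i : 'I_m.+1 => (inord (g i) : 'I_n.+1)].
Proof.
move=> Hg; apply: monobP => i j Hij; have := ltn_ord i; have := ltn_ord j.
rewrite !ffunE !inordK ?ltnS; try (apply: homf_le Hg _; rewrite -ltnS //).
by move=> Hj _; apply: Hg.1.
Qed.

Lemma mkhomE m n g (i : 'I_m.+1) : homf m n g -> (hfun (mkhom m n g) i : nat) = g i.
Proof.
move=> Hg; rewrite /hfun /mkhom val_insubd mkhom_mono // ffunE inordK //.
by rewrite ltnS; apply: homf_le Hg _; rewrite -ltnS.
Qed.

Lemma hom_ext m n (f f' : hom m n) :
  (forall i : 'I_m.+1, (hfun f i : nat) = hfun f' i) -> f = f'.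
Proof. by move=> E; apply: val_inj; apply/ffunP => i; apply: val_inj; exact: E. Qed.

Lemma eq_mkhom m n f f' : homf m n f -> (forall i, i <= m -> f i = f' i) ->
  mkhom m n f = mkhom m n f'.
Proof.
move=> Hf E; apply: hom_ext => i; have Hi : i <= m by rewrite -ltnS.
by rewrite !mkhomE ?E //; exact: homf_ext E.
Qed.

Lemma hom_mkhom m n (f : hom m n) : homf m n (fun i => hfun f (inord i)) /\
  f = mkhom m n (fun i => hfun f (inord i)).
Proof.
have Hf : homf m n (fun i => hfun f (inord i)).
  split=> [i j Hij Hj|]; first by apply: hfun_mono; rewrite !inordK //; lia.
  by rewrite -ltnS ltn_ord.
by split=> //; apply: hom_ext => i; rewrite mkhomE // inord_val.
Qed.

Lemma comph_mkhom m k n f g : homf m k f -> homf k n g ->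
  comph (mkhom k n g) (mkhom m k f) = mkhom m n (fun i => g (f i)).
Proof.
move=> Hf Hg; apply: hom_ext => i; rewrite (mkhomE _ (homf_comp Hf Hg)).
rewrite {1}/hfun /comph /= ffunE.
have Hfi : f i < k.+1 by rewrite ltnS; apply: homf_le Hf _; rewrite -ltnS.
have -> : hfun (mkhom m k f) i = Ordinal Hfi by apply: ord_inj; rewrite mkhomE.
by rewrite mkhomE.
Qed.

Lemma degh_mkhom : degh = mkhom 1 0 (fun _ => 0).
Proof. by apply: hom_ext => i; rewrite mkhomE // /hfun /= ffunE. Qed.

Lemma edgeh_mkhom n (i : 'I_n) : edgeh i = mkhom 1 n (pt2 i i.+1).
Proof.
have Hi := ltn_ord i.
apply: hom_ext => j; rewrite mkhomE; last exact: homf2 (leqnSn _) Hi.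
rewrite /hfun /= ffunE inordK; case: j => [[|[|]]] //= _; rewrite ?addn0 ?addn1 //; lia.
Qed.

Lemma longh_mkhom n : longh n = mkhom 1 n (pt2 0 n).
Proof.
apply: hom_ext => j; rewrite mkhomE; last exact: homf2.
by rewrite /hfun /= ffunE inordK; case: j => [[|[|]]] //= _; rewrite ?mul0n ?mul1n.
Qed.

Lemma revh_mkhom m n g : homf m n g -> revh (mkhom m n g) = mkhom m n (fun i => n - g (m - i)).
Proof.
move=> Hg; apply: hom_ext => i; rewrite (mkhomE _ (homf_rev Hg)) /hfun /= ffunE /=.
by have := mkhomE (rev_ord i) Hg; rewrite /hfun => ->.
Qed.

Section Restriction.
Variable S : sSet.

Definition restr m n (g : nat -> nat) (x : S n) : S m := @sact S m n (mkhom m n g) x.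
Definition edge n p q (x : S n) : S 1 := restr 1 (pt2 p q) x.

Lemma restr_comp m k n f g (x : S n) : homf m k f -> homf k n g ->
  restr m f (restr k g x) = restr m (fun i => g (f i)) x.
Proof. by move=> Hf Hg; rewrite /restr sact_comp comph_mkhom. Qed.

Lemma eq_restr m n f f' (x : S n) : homf m n f -> (forall i, i <= m -> f i = f' i) ->
  restr m f x = restr m f' x.
Proof. by move=> Hf E; rewrite /restr (eq_mkhom Hf E). Qed.

Lemma restr_compE m k n f g h (x : S n) : homf m k f -> homf k n g ->
  (forall i, i <= m -> g (f i) = h i) -> restr m f (restr k g x) = restr m h x.
Proof. by move=> Hf Hg E; rewrite restr_comp //; apply: eq_restr E; exact: homf_comp Hf Hg. Qed.

Lemma restr_id n (x : S n) : restr n id x = x.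
Proof.
rewrite /restr -[RHS](sact_id x); congr sact.
by apply: hom_ext => i; rewrite mkhomE // /hfun /= ffunE.
Qed.

Lemma edge_restr k n g p q (x : S n) : homf k n g -> p <= q -> q <= k ->
  edge p q (restr k g x) = edge (g p) (g q) x.
Proof.
move=> Hg Hpq Hq; have H2 := homf2 Hpq Hq.
by rewrite /edge restr_comp //; apply: eq_restr => [|[|i]] //; exact: homf_comp H2 Hg.
Qed.

Lemma edge_restrE k n g p q p' q' (x : S n) : homf k n g -> p <= q -> q <= k ->
  g p = p' -> g q = q' -> edge p q (restr k g x) = edge p' q' x.
Proof. by move=> Hg Hpq Hq <- <-; apply: edge_restr. Qed.

Lemma edge_restr_id k n (x : S n) p q : p <= q -> q <= k -> k <= n ->
  edge p q (restr k id x) = edge p q x.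
Proof. by move=> *; apply: edge_restr => //; homf_lia. Qed.

Lemma edge_restr_shift k n (x : S n) s p q : p <= q -> q <= k -> s + k <= n ->
  edge p q (restr k (fun i => s + i) x) = edge (s + p) (s + q) x.
Proof. by move=> *; apply: edge_restr => //; homf_lia. Qed.

Lemma edge_restr3 n (x : S n) p q r a b : p <= q -> q <= r -> r <= n -> a <= b -> b <= 2 ->
  edge a b (restr 2 (pt3 p q r) x) = edge (pt3 p q r a) (pt3 p q r b) x.
Proof. by move=> *; apply: edge_restr => //; exact: homf3. Qed.

Lemma edge_restr4 n (x : S n) p q r s a b : p <= q -> q <= r -> r <= s -> s <= n ->
  a <= b -> b <= 3 ->
  edge a b (restr 3 (pt4 p q r s) x) = edge (pt4 p q r s a) (pt4 p q r s b) x.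
Proof. by move=> *; apply: edge_restr => //; exact: homf4. Qed.

Lemma edge_congr n (x : S n) p q p' q' : p = p' -> q = q' -> edge p q x = edge p' q' x.
Proof. by move=> -> ->. Qed.

Lemma edge01 (x : S 1) : edge 0 1 x = x.
Proof.
rewrite -[RHS]restr_id; apply: eq_restr; first exact: homf2.
by case=> [|[|]].
Qed.

Lemma enum_opE n (x : S n) (i : 'I_n) : enum_op x i = edge i i.+1 x.
Proof. by rewrite /enum_op edgeh_mkhom. Qed.

Lemma prod_opE n (x : S n) : prod_op x = edge 0 n x.
Proof. by rewrite /prod_op longh_mkhom. Qed.

Lemma eq_by_edges : N_simplicial S -> forall n (x y : S n), 0 < n ->
  (forall i, i < n -> edge i i.+1 x = edge i i.+1 y) -> x = y.
Proof. by move=> HN n x y Hn E; apply: HN => // i; rewrite !enum_opE E. Qed.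

Definition unit1 (v : S 0) : S 1 := @sact S 1 0 degh v.

Lemma edge_diag (v : S 0) : (forall w : S 0, w = v) ->
  forall n p (x : S n), p <= n -> edge p p x = unit1 v.
Proof.
move=> Hv n p x Hp; rewrite /edge (@eq_restr 1 n _ (fun _ => p)); last 2 first.
- exact: homf2.
- by case.
rewrite -(@restr_comp 1 0 n (fun _ => 0) (fun _ => p)) //.
by rewrite /unit1 degh_mkhom (Hv (restr 0 _ x)).
Qed.

End Restriction.

Lemma smap_restr (X Y : sSet) (g : forall n, X n -> Y n) : is_smap g ->
  forall m n h (x : X n), g m (restr m h x) = restr m h (g n x).
Proof. by move=> Hg m n h x; rewrite /restr Hg. Qed.

Lemma smap_op_restr (X Y : sSet) (g : forall n, X n -> Y n) : is_smap_op g ->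
  forall m n h (x : X n), homf m n h ->
  g m (restr m h x) = restr m (fun i => n - h (m - i)) (g n x).
Proof. by move=> Hg m n h x Hh; rewrite /restr Hg revh_mkhom. Qed.
Lemma smap_op_edge (X Y : sSet) (g : forall n, X n -> Y n) : is_smap_op g ->
  forall n p q (x : X n), p <= q -> q <= n -> edge p q (g n x) = g 1 (edge (n - q) (n - p) x).
Proof.
move=> Hg n p q x Hpq Hq; rewrite /edge smap_op_restr //; last by apply: homf2; lia.
by apply: eq_restr => [|[|[|]]] //=; [exact: homf2 | lia | lia].
Qed.

(** * Inversion witnesses in partial groups *)

(* [w = [a | x]] is a [2n]-simplex whose middle edges [(n - k, n + k)] are all units, i.e. each
   product [Pi [a_(n-k+1) | ... | a_n | x_1 | ... | x_k]] is trivial. *)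
Definition inv_witness (S : sSet) (v : S 0) n (a x : S n) (w : S (n + n)) :=
  [/\ restr n id w = a, restr n (fun i => n + i) w = x &
      forall k, k <= n -> edge (n - k) (n + k) w = unit1 v].

Lemma inv_witness1 (S : sSet) (v : S 0) (Hv : forall w, w = v) (a x : S 1) (w : S 2) :
  edge 0 1 w = a -> edge 1 2 w = x -> edge 0 2 w = unit1 v -> inv_witness v a x w.
Proof.
move=> H01 H12 H02; split.
- by rewrite -H01; apply: eq_restr => [|[|[|]]] //; homf_lia.
- by rewrite -H12; apply: eq_restr => [|[|[|]]] //; homf_lia.
- by case=> [|[|k]] //= _; rewrite (edge_diag Hv).
Qed.

Section PartialGroup.
Variables (P : sSet) (v : P 0) (nu : forall n, P n -> P n).
Hypotheses (Hv : forall w : P 0, w = v) (HN : N_simplicial P) (Hnu : is_inversion nu).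

Notation u := (unit1 v).

Lemma inv_edge n p q (x : P n) : p <= q -> q <= n ->
  edge p q (nu x) = nu (edge (n - q) (n - p) x).
Proof. by case: Hnu => Hop _ _; exact: smap_op_edge. Qed.

Lemma invK n (x : P n) : nu (nu x) = x.
Proof. by case: Hnu. Qed.

Lemma inv_unit : nu u = u.
Proof.
case: Hnu => Hop _ _; rewrite /unit1 Hop (Hv (nu v)); congr sact.
by apply: hom_ext => i; rewrite /hfun /= !ffunE.
Qed.

Lemma inversion_simplex n (x : P n) : 0 < n -> exists w : P (n + n),
  [/\ restr n id w = nu x, restr n (fun i => n + i) w = x & edge 0 (n + n) w = u].
Proof.
move=> Hn; case: Hnu => _ _ /(_ n Hn x) [w [Hw [v' [_ Hu]]]].
exists w; split.
- apply: eq_by_edges => // i Hi; rewrite edge_restr //; last by homf_lia.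
  have Hi2 : i < n + n by lia.
  have := Hw (Ordinal Hi2); rewrite !enum_opE /= => ->.
  rewrite /concat_edges; case: splitP => j /= Hj; last by lia.
  by rewrite enum_opE Hj.
- apply: eq_by_edges => // i Hi; rewrite edge_restr //; last by homf_lia.
  have Hi2 : n + i < n + n by lia.
  have := Hw (Ordinal Hi2); rewrite !enum_opE /= addnS => ->.
  rewrite /concat_edges; case: splitP => j /= Hj; first by have := ltn_ord j; lia.
  have -> : i = j by lia.
  by rewrite enum_opE.
- by rewrite -prod_opE Hu (Hv v').
Qed.

Lemma inversion_simplex_middle n k (x : P n) (w : P (n + n)) (wk : P (k + k)) :
  0 < k -> k <= n -> restr n id w = nu x -> restr n (fun i => n + i) w = x ->
  restr k id wk = nu (restr k id x) -> restr k (fun i => k + i) wk = restr k id x ->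
  restr (k + k) (fun i => n - k + i) w = wk.
Proof.
move=> Hk Hkn Hw1 Hw2 Hwk1 Hwk2; apply: eq_by_edges; rewrite ?addn_gt0 ?Hk // => i Hi.
rewrite edge_restr //; last by homf_lia.
case: (ltnP i k) => Hik.
- rewrite -(@edge_restr_id _ k _ wk i i.+1) ?Hwk1 ?inv_edge ?edge_restr_id; try lia.
  rewrite -(@edge_restr_id _ n _ w (n - k + i)) ?Hw1 ?inv_edge; try lia.
  by congr (@nu 1); apply: edge_congr; lia.
- transitivity (edge (k + (i - k)) (k + (i - k).+1) wk); last by apply: edge_congr; lia.
  rewrite -(@edge_restr_shift _ k _ wk k) ?Hwk2 ?edge_restr_id; try lia.
  rewrite -Hw2 edge_restr_shift; try lia.
  by apply: edge_congr; lia.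
Qed.

(* The middle edge [(n - k, n + k)] of the inversion simplex of [x] is the product of the
   inversion simplex of the initial segment [x|[0..k]]. *)
Lemma inv_witness_inv n (x : P n) : exists w : P (n + n), inv_witness v (nu x) x w.
Proof.
case: (posnP n) => [->|Hn] in x *.
  exists x; split; rewrite ?(Hv (nu _)) ?(Hv x) ?(Hv (restr _ _ _)) //.
  by case=> // _; rewrite (edge_diag Hv).
have [w [Hw1 Hw2 Hw3]] := inversion_simplex x Hn; exists w; split=> // k Hk.
case: (posnP k) => [->|Hk0]; first by rewrite subn0 addn0 (edge_diag Hv) //; lia.
have [wk [Hwk1 Hwk2 Hwk3]] := inversion_simplex (restr k id x) Hk0.
rewrite -(@edge_restrE _ (k + k) _ (fun i => n - k + i) 0 (k + k)); try (homf_lia || lia).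
by rewrite (inversion_simplex_middle Hk0 Hk Hw1 Hw2 Hwk1 Hwk2).
Qed.

Lemma edge_comp_unitr (s : P 2) : edge 1 2 s = u -> edge 0 2 s = edge 0 1 s.
Proof.
move=> H; have E : s = restr 2 (pt3 0 1 1) s.
  by apply: eq_by_edges => // [[|[|]]] // _; rewrite edge_restr3 //= H (edge_diag Hv).
by rewrite {1}E edge_restr3.
Qed.

Lemma edge_comp_unitl (s : P 2) : edge 0 1 s = u -> edge 0 2 s = edge 1 2 s.
Proof.
move=> H; have E : s = restr 2 (pt3 1 1 2) s.
  by apply: eq_by_edges => // [[|[|]]] // _; rewrite edge_restr3 //= H (edge_diag Hv).
by rewrite {1}E edge_restr3.
Qed.

Lemma inv_witness_restr n m g (a x : P n) (w : P (n + n)) : homf m n g ->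
  inv_witness v a x w ->
  inv_witness v (restr m (fun i => n - g (m - i)) a) (restr m g x)
    (restr (m + m) (fun i => if i <= m then n - g (m - i) else n + g (i - m)) w).
Proof.
move=> Hg [Ha Hx Hmid]; set G := (fun i => if _ then _ else _).
have HG : homf (m + m) (n + n) G.
  case: (Hg) => Hmono Hgm; split=> [i j Hij Hj|]; last by rewrite /G addKn; case: ifP; lia.
  rewrite /G; case: (leqP i m) => Hi; case: (leqP j m) => Hj2; try lia.
  + by have := Hmono (m - j) (m - i); have := homf_le Hg (leq_subr i m); lia.
  + by have := Hmono (i - m) (j - m); lia.
split.
- rewrite -Ha (@restr_compE _ _ _ _ _ _ (fun i => n - g (m - i))) //; try homf_lia.
  + by rewrite restr_comp //; [exact: homf_rev | homf_lia].
  + by move=> i Hi; rewrite /G Hi.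
- rewrite -Hx (@restr_compE _ _ _ _ _ _ (fun i => G (m + i))) //; try homf_lia.
  rewrite (@restr_compE _ _ _ _ _ _ (fun i => n + g i)) //; try homf_lia.
  case: (posnP m) => [m0|Hm]; first by move: G HG {Hmid}; rewrite m0 => G HG; rewrite !(Hv (restr _ _ _)).
  have H1 : homf m (n + n) (fun i => G (m + i)) by apply: homf_comp HG; homf_lia.
  have H2 : homf m (n + n) (fun i => n + g i) by apply: homf_comp Hg _; homf_lia.
  have EG i : G (m + i.+1) = n + g i.+1 by rewrite /G ifF ?addKn //; lia.
  apply: eq_by_edges => // i Hi; rewrite !edge_restr // EG.
  case: i Hi => [|i] Hi; last by rewrite EG.
  have g01 : g 0 <= g 1 by apply: Hg.1.
  have g1n : g 1 <= n by apply: homf_le Hg _.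
  rewrite /G addn0 leqnn subnn.
  rewrite -(@edge_restr3 _ _ w (n - g 0) (n + g 0) (n + g 1) 0 2); try lia.
  rewrite edge_comp_unitl; last by rewrite edge_restr3 /=; try lia; apply: Hmid; lia.
  by rewrite edge_restr3 //; lia.
- move=> k Hk; rewrite edge_restr //; try lia.
  case: k Hk => [|k] Hk; first by rewrite subn0 addn0 (edge_diag Hv) //; apply: (homf_le HG); lia.
  rewrite /G ifT ?ifF; try lia.
  have -> : m - (m - k.+1) = k.+1 by lia.
  have -> : m + k.+1 - m = k.+1 by lia.
  by apply: Hmid; exact: homf_le Hg Hk.
Qed.

Lemma edge_divr (s : P 2) : exists t : P 2,
  [/\ edge 0 1 t = edge 0 2 s, edge 1 2 t = nu (edge 1 2 s) & edge 0 2 t = edge 0 1 s].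
Proof.
have [T [H1 H2 H3]] := inv_witness_inv (nu s); rewrite invK in H1.
exists (restr 2 (pt3 0 2 3) T); split.
- by rewrite edge_restr3 //= -H1 edge_restr_id.
- rewrite edge_restr3 //=; transitivity (edge 0 1 (nu s)); last by rewrite inv_edge.
  by rewrite -H2 edge_restr_shift.
- rewrite edge_restr3 //=.
  have -> : edge 0 3 T = edge 0 2 (restr 2 (pt3 0 1 3) T) by rewrite edge_restr3.
  rewrite edge_comp_unitr; last by rewrite edge_restr3 //= (H3 1).
  by rewrite edge_restr3 //= -H1 edge_restr_id.
Qed.

Lemma edge_cancelr N (z z' : P N) p q r : p <= q -> q <= r -> r <= N ->
  edge q r z = edge q r z' -> edge p r z = edge p r z' -> edge p q z = edge p q z'.
Proof.
move=> Hpq Hqr HrN Eqr Epr.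
have [t [t01 t12 t02]] := edge_divr (restr 2 (pt3 p q r) z).
have [t' [t01' t12' t02']] := edge_divr (restr 2 (pt3 p q r) z').
rewrite !edge_restr3 //= in t01 t12 t02 t01' t12' t02'.
rewrite -t02 -t02'; congr edge.
by apply: eq_by_edges => // [[|[|]]] // _; rewrite ?t01 ?t01' ?t12 ?t12' ?Eqr ?Epr.
Qed.

Lemma eq_by_back_half n (z z' : P (n + n)) :
  restr n (fun i => n + i) z = restr n (fun i => n + i) z' ->
  (forall k, k <= n -> edge (n - k) (n + k) z = edge (n - k) (n + k) z') -> z = z'.
Proof.
move=> Eback Emid; case: (posnP n) => [n0|Hn].
  by move: z z' {Eback Emid}; rewrite n0 => z z'; rewrite (Hv z) (Hv z').
have Eb i : n <= i -> i < n + n -> edge i i.+1 z = edge i i.+1 z'.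
  move=> H1 H2; transitivity (edge (n + (i - n)) (n + (i - n).+1) z); first by apply: edge_congr; lia.
  rewrite -(@edge_restr_shift _ n _ z n) ?Eback ?edge_restr_shift; try lia.
  by apply: edge_congr; lia.
apply: eq_by_edges; rewrite ?addn_gt0 ?Hn // => i Hi.
case: (leqP n i) => Hni; first exact: Eb.
have E : edge i (n + (n - i)).-1 z = edge i (n + (n - i)).-1 z'.
  apply: (@edge_cancelr _ _ _ _ _ (n + (n - i))); try lia.
  - by have := Eb (n + (n - i)).-1; rewrite prednK; [apply; lia | lia].
  - by have := Emid (n - i); rewrite subKn; [apply; lia | exact: ltnW].
apply: (@edge_cancelr _ _ _ _ _ (n + (n - i)).-1); try lia; last exact: E.
have := Emid (n - i).-1; have -> : n - (n - i).-1 = i.+1 by lia.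
have -> : n + (n - i).-1 = (n + (n - i)).-1 by lia.
by apply; lia.
Qed.

(* [[nu c | c | nu c]], the first half of an inversion witness of an inversion witness of [c]. *)
Lemma inv_sandwich (c : P 1) : exists R : P 3, [/\ edge 1 2 R = c, edge 0 2 R = u & edge 1 3 R = u].
Proof.
have [W [W1 W2 W3]] := inv_witness_inv c.
have [W' [W'1 W'2 W'3]] := inv_witness_inv W.
exists (restr 3 id W'); rewrite !edge_restr_id //; split; last exact: W'3 1 _.
- rewrite -(@edge_restr_id _ 2 _ W') // W'1 inv_edge //=.
  by rewrite -(@edge_restr_id _ 1 _ W) // W1 edge01 invK.
- by rewrite -(@edge_restr_id _ 2 _ W') // W'1 inv_edge //= (W3 1) // inv_unit.
Qed.

End PartialGroup.

(** * Local trivializations *)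

Lemma smap_unit1 (X B : sSet) (tau : forall n, X n -> B n) (vX : X 0) (vB : B 0) :
  is_smap tau -> (forall w, w = vB) -> tau 1 (unit1 vX) = unit1 vB.
Proof. by move=> Htau HvB; rewrite /unit1 Htau (HvB (tau 0 vX)). Qed.

Section Trivialization.
Unset Implicit Arguments.
Variables (X B F : sSet) (tau : forall n, X n -> B n) (vX : X 0) (vB : B 0) (vF : F 0).
Hypotheses (Htau : is_smap tau) (HvX : forall w, w = vX) (HvB : forall w, w = vB)
  (HNB : N_simplicial B).
Variables (n : nat) (b : B n) (phi : forall m, F m -> hom m n -> X m).
Hypothesis Hphi : trivialization tau b phi.
Set Implicit Arguments.

Lemma triv_tau m (y : F m) (f : hom m n) : tau m (phi m y f) = sact f b.
Proof. by case: Hphi. Qed.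

Lemma triv_inj m (f : hom m n) (y y' : F m) : phi m y f = phi m y' f -> y = y'.
Proof.
move=> E; case: Hphi => _ _ /(_ m f (phi m y f) (triv_tau y f)) [z [_ Hz]].
by rewrite -(Hz y) // (Hz y').
Qed.

Lemma triv_surj m (f : hom m n) (x : X m) : tau m x = sact f b -> exists y, phi m y f = x.
Proof. by case: Hphi => _ _ /(_ m f x) H /H [y [Hy _]]; exists y. Qed.

Lemma triv_restr k m g f (y : F m) : homf k m g -> homf m n f ->
  phi k (restr k g y) (mkhom k n (fun i => f (g i))) = restr k g (phi m y (mkhom m n f)).
Proof. by move=> Hg Hf; case: Hphi => _ Hnat _; rewrite /restr -Hnat comph_mkhom. Qed.

Lemma triv_restr_id k g (y : F n) : homf k n g ->
  phi k (restr k g y) (mkhom k n g) = restr k g (phi n y (mkhom n n id)).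
Proof. by move=> Hg; rewrite -triv_restr. Qed.

Lemma triv_surj_id (x : X n) : tau n x = b -> exists y, phi n y (mkhom n n id) = x.
Proof. by move=> Hx; apply: triv_surj; rewrite -/(restr _ _ b) restr_id. Qed.

Lemma triv_edge p q (y : F n) : p <= q -> q <= n ->
  edge p q (phi n y (mkhom n n id)) = phi 1 (edge p q y) (mkhom 1 n (pt2 p q)).
Proof. by move=> Hpq Hq; rewrite /edge -triv_restr_id //; exact: homf2. Qed.

Lemma triv_lift_unit p q : edge p q b = unit1 vB ->
  exists c, phi 1 c (mkhom 1 n (pt2 p q)) = unit1 vX.
Proof. by move=> Hb; apply: triv_surj; rewrite (smap_unit1 _ Htau HvB) -Hb. Qed.

Lemma triv_unit p : p <= n -> phi 1 (unit1 vF) (mkhom 1 n (pt2 p p)) = unit1 vX.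
Proof.
move=> Hp; rewrite /unit1 degh_mkhom (@eq_mkhom 1 n (pt2 p p) (fun _ => p)); [|exact: homf2|by case].
have := @triv_restr 1 0 (fun _ => 0) (fun _ => p) vF (homf_const _ (leqnn 0)) (homf_const _ Hp).
by rewrite /restr => ->; rewrite (HvX (phi _ _ _)).
Qed.

(* [Z] lifts the degeneracy [[1 | phi t]] over the unit edge [(p, q)] followed by [q]; its first
   edge lifts [1_X] over [(p, q)], hence is [c].  [fibre_append] is the mirror image. *)
Lemma fibre_prepend p q c : edge p q b = unit1 vB ->
  phi 1 c (mkhom 1 n (pt2 p q)) = unit1 vX -> p <= q -> q <= n ->
  forall m (t : F m), exists Z : F m.+1, edge 0 1 Z = c /\ restr m (fun i => i.+1) Z = t.
Proof.
move=> Hb Hc Hpq Hqn m t.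
pose s := restr m.+1 (fun j => j.-1) (phi m t (mkhom m n (fun _ => q))).
have Hpred : homf m.+1 m (fun j => j.-1) by homf_lia.
have Hpq2 : homf m.+1 n (pt2 p q) by split=> // [[|i]] [|j].
have Hs : tau m.+1 s = sact (mkhom m.+1 n (pt2 p q)) b.
  rewrite /s smap_restr // triv_tau -/(restr _ _ b) restr_comp //.
  apply: eq_by_edges => // i Hi; rewrite !edge_restr //.
  by case: i Hi => [|i] Hi //=; rewrite Hb (edge_diag HvB).
have [Z HZ] := triv_surj Hs.
exists Z; split.
- apply: (@triv_inj 1 (mkhom 1 n (pt2 p q))); rewrite Hc.
  rewrite (@eq_mkhom 1 n _ (fun i => pt2 p q (pt2 0 1 i))); [|exact: homf2|by case].
  rewrite /edge triv_restr //; last exact: homf2.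
  by rewrite HZ /s -/(edge 0 1 _) edge_restr //= (edge_diag HvX).
- apply: (@triv_inj m (mkhom m n (fun _ => q))).
  rewrite {1}(@eq_mkhom m n (fun _ => q) (fun i => pt2 p q i.+1)); [|exact: homf_const|by []].
  rewrite triv_restr //; try by homf_lia.
  rewrite HZ /s restr_comp //; try by homf_lia.
  by rewrite (@eq_restr _ m m _ id) ?restr_id //; homf_lia.
Qed.

Lemma fibre_append p q d : edge p q b = unit1 vB ->
  phi 1 d (mkhom 1 n (pt2 p q)) = unit1 vX -> p <= q -> q <= n ->
  forall m (t : F m), exists Z : F m.+1, edge m m.+1 Z = d /\ restr m id Z = t.
Proof.
move=> Hb Hd Hpq Hqn m t.
pose s := restr m.+1 (fun j => minn j m) (phi m t (mkhom m n (fun _ => p))).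
pose g j := if j <= m then p else q.
have Hmin : homf m.+1 m (fun j => minn j m) by homf_lia.
have Hg : homf m.+1 n g.
  split=> [i j Hij Hj|]; last by rewrite /g ltnn.
  by rewrite /g; case: (leqP i m) => Hi; case: (leqP j m) => Hj' //; lia.
have Hs : tau m.+1 s = sact (mkhom m.+1 n g) b.
  rewrite /s smap_restr // triv_tau -/(restr _ _ b) restr_comp //; try (apply: homf_const; lia).
  apply: eq_by_edges => // i Hi; rewrite !edge_restr //; try (apply: homf_const; lia).
  rewrite /g; case: (ltnP i m) => Him; first by rewrite (ltnW Him).
  have -> : i = m by lia.
  by rewrite leqnn Hb (edge_diag HvB) //; lia.
have [Z HZ] := triv_surj Hs.
exists Z; split.
- apply: (@triv_inj 1 (mkhom 1 n (pt2 p q))); rewrite Hd.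
  rewrite (@eq_mkhom 1 n _ (fun i => g (pt2 m m.+1 i))); first last.
  + by case=> [|i] Hi //=; rewrite /g ?leqnn ?ltnn.
  + exact: homf2.
  rewrite /edge triv_restr //; last exact: homf2.
  rewrite HZ /s -/(edge m m.+1 _) edge_restr //=.
  have -> : minn m.+1 m = m by lia.
  by rewrite minnn (edge_diag HvX).
- apply: (@triv_inj m (mkhom m n (fun _ => p))).
  rewrite {1}(@eq_mkhom m n (fun _ => p) g); first last.
  + by move=> i Hi; rewrite /g Hi.
  + by apply: homf_const; lia.
  have -> : mkhom m n g = mkhom m n (fun i => g (id i)) by [].
  rewrite triv_restr //; try by homf_lia.
  rewrite HZ /s restr_comp //; try by homf_lia.
  by rewrite (@eq_restr _ m m _ id) ?restr_id //; [homf_lia | move=> i Hi; lia].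
Qed.

End Trivialization.



(** * The total space *)

Section TotalSpace.
Unset Implicit Arguments.
Variables (X B F : sSet) (tau : forall n, X n -> B n) (vB : B 0) (vF : F 0)
  (nuB : forall n, B n -> B n) (nuF : forall n, F n -> F n).
Hypotheses (Htau : is_smap tau)
  (Htriv : forall n (b : B n), exists phi : forall m, F m -> hom m n -> X m,
     trivialization tau b phi)
  (HvB : forall w, w = vB) (HNB : N_simplicial B) (HnuB : is_inversion nuB)
  (HvF : forall w, w = vF) (HNF : N_simplicial F) (HnuF : is_inversion nuF).
Set Implicit Arguments.

Lemma reduced_total : exists v : X 0, forall w, w = v.
Proof.
have [phi Hphi] := Htriv _ vB.
exists (phi 0 vF (idh 0)) => x.
have [y <-] : exists y, phi 0 y (idh 0) = x.
  by apply: (triv_surj Hphi); rewrite sact_id (HvB (tau 0 x)).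
by rewrite (HvF y).
Qed.

Lemma N_simplicial_total : N_simplicial X.
Proof.
move=> n Hn x y Exy.
have [phi Hphi] := Htriv _ (tau n x).
have [[zx Hzx] [zy Hzy]] : (exists z, phi n z (idh n) = x) /\ (exists z, phi n z (idh n) = y).
  split; apply: (triv_surj Hphi); rewrite sact_id //.
  by apply: HNB => // i; rewrite /enum_op -!Htau; congr tau; exact: esym (Exy i).
rewrite -Hzx -Hzy; congr phi; apply: HNF => // i.
apply: (triv_inj Hphi (f := comph (idh n) (edgeh i))).
by case: Hphi => _ Hnat _; rewrite /enum_op !Hnat Hzx Hzy; exact: Exy i.
Qed.

Variable vX : X 0.
Hypothesis HvX : forall w, w = vX.

Section InverseLift.
Unset Implicit Arguments.
Variables (N : nat) (W : B (N + N)) (phi : forall m, F m -> hom m (N + N) -> X m) (y : F N).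
Hypotheses (HW : forall k, k <= N -> edge (N - k) (N + k) W = unit1 vB)
  (Hphi : trivialization tau W phi).
Set Implicit Arguments.

Definition inv_lift k (s : F (k + N)) :=
  restr N (fun i => k + i) s = y /\
  forall j, j <= k -> phi 1 (edge (k - j) (k + j) s) (mkhom 1 (N + N) (pt2 (N - j) (N + j))) = unit1 vX.

Lemma inv_lift0 : @inv_lift 0 y.
Proof.
split; first by rewrite (@eq_restr _ N N _ id) ?restr_id //; homf_lia.
case=> // _; rewrite !subn0 !addn0 (edge_diag HvF) //.
exact (triv_unit vF HvX Hphi (leq_addr N N)).
Qed.

(* With [T = [nu s | s]] the inversion witness of [s], [e] its edge from vertex [N - k.+1] to the
   start of [s] and [c] the fibre lift of the next unit edge of [W], put [Z = [c | e | s]] and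
   drop its vertex 1.  The new outermost middle edge is [c], because the edge of [Z] from
   vertex 1 to the end of that range is a middle edge of [T], hence a unit. *)
Lemma inv_liftS k (s : F (k + N)) : k < N -> inv_lift s -> exists s' : F (k.+1 + N), inv_lift s'.
Proof.
move=> Hk [Hs_back Hs_mid].
have [T [_ HT2 HT3]] := inv_witness_inv HvF HNF HnuF s.
pose g1 i := if i is i'.+1 then k + N + i' else N - k.+1.
have Hg1 : homf (k + N).+1 ((k + N) + (k + N)) g1 by split=> [[|i] [|j]|] //=; lia.
have [c Hc] := triv_lift_unit vX Htau HvB Hphi (HW _ Hk).
have Hpq : N - k.+1 <= N + k.+1 by lia.
have HqN : N + k.+1 <= N + N by lia.
have [Z [HZ0 HZ]] := fibre_prepend Htau HvX HvB HNB Hphi (HW _ Hk) Hc Hpq HqN (restr (k + N).+1 g1 T).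
pose g2 i := if i is i'.+1 then i'.+2 else 0.
have Hg2 : homf (k.+1 + N) (k + N).+2 g2 by split=> [[|i] [|j]|] //=; lia.
exists (restr (k.+1 + N) g2 Z); split.
- rewrite (@restr_compE _ _ _ _ _ _ (fun i => (k.+1 + i).+1)) //; try homf_lia.
  have -> : restr N (fun i => (k.+1 + i).+1) Z =
            restr N (fun i => k.+1 + i) (restr (k + N).+1 (fun i => i.+1) Z).
    by rewrite restr_comp //; homf_lia.
  rewrite HZ (@restr_compE _ _ _ _ _ _ (fun i => k + N + (k + i))) //; try homf_lia.
  by rewrite -Hs_back -HT2 restr_comp //; homf_lia.
- have Eold j : j <= k -> edge (k.+1 - j) (k.+1 + j) (restr (k.+1 + N) g2 Z) = edge (k - j) (k + j) s.
    move=> Hj; rewrite (@edge_restrE _ _ _ _ _ _ (k.+1 - j).+1 (k.+1 + j).+1) //;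
      try (rewrite /g2; case_nat; lia); try lia.
    rewrite -(@edge_restrE _ (k + N).+1 _ (fun i => i.+1) (k.+1 - j) (k.+1 + j) _ _ Z) //;
      try lia; try homf_lia.
    rewrite HZ (@edge_restrE _ _ _ _ _ _ (k + N + (k - j)) (k + N + (k + j))) //;
      try (rewrite /g1; case_nat; lia); try lia.
    by rewrite -HT2 edge_restr_shift //; lia.
  move=> j Hj; case: (leqP j k) => Hjk; first by rewrite Eold // Hs_mid.
  have -> : j = k.+1 by lia.
  rewrite subnn (@edge_restrE _ _ _ _ _ _ 0 (k.+1 + k.+1).+1) //; try lia.
  rewrite -(@edge_restr3 _ _ Z 0 1 (k.+1 + k.+1).+1 0 2) //; try lia.
  rewrite (edge_comp_unitr HvF HNF) edge_restr3 //= ?HZ0 //; try lia.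
  rewrite -(@edge_restrE _ (k + N).+1 _ (fun i => i.+1) 0 (k.+1 + k.+1) _ _ Z) //;
    try lia; try homf_lia.
  rewrite HZ (@edge_restrE _ _ _ _ _ _ (k + N - (k.+1 + k)) (k + N + (k.+1 + k))) //;
    try (rewrite /g1; case_nat; lia); try lia.
  by rewrite HT3 //; lia.
Qed.

Lemma inv_lift_full : exists s : F (N + N), inv_lift s.
Proof.
suff: forall k, k <= N -> exists s : F (k + N), inv_lift s by apply.
elim=> [|k IH] Hk; first by exists y; exact: inv_lift0.
by have [s Hs] := IH (ltnW Hk); exact: inv_liftS Hk Hs.
Qed.

End InverseLift.

Lemma inv_witness_total n (x : X n) : exists a w, inv_witness vX a x w.
Proof.
have [W [_ HW2 HW3]] := inv_witness_inv HvB HNB HnuB (tau n x).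
have [phi Hphi] := Htriv _ W.
have [y Hy] : exists y, phi n y (mkhom n (n + n) (fun i => n + i)) = x.
  by apply: (triv_surj Hphi); rewrite -/(restr _ _ W) HW2.
have [s [Hs_back Hs_mid]] := inv_lift_full y HW3 Hphi.
pose w := phi (n + n) s (mkhom (n + n) (n + n) id).
exists (restr n id w), w; split=> //.
- by rewrite -Hy -Hs_back (triv_restr_id Hphi) //; homf_lia.
- by move=> k Hk; rewrite (triv_edge Hphi) ?Hs_mid //; lia.
Qed.

Lemma inv_witness_total_uniq n (a a' x : X n) (w w' : X (n + n)) :
  inv_witness vX a x w -> inv_witness vX a' x w' -> a = a'.
Proof.
move=> [Hw1 Hw2 Hw3] [Hw1' Hw2' Hw3'].
have Eb : tau (n + n) w' = tau (n + n) w.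
  apply: (eq_by_back_half HvB HNB HnuB).
  - by rewrite -!(smap_restr Htau) Hw2 Hw2'.
  - move=> k Hk; rewrite /edge -!(smap_restr Htau).
    by move: (Hw3 k Hk) (Hw3' k Hk); rewrite /edge => -> ->.
have [phi Hphi] := Htriv _ (tau (n + n) w).
have [z Hz] := triv_surj_id Hphi (erefl _).
have [z' Hz'] := triv_surj_id Hphi Eb.
suff Ez : z = z' by rewrite -Hw1 -Hw1' -Hz -Hz' Ez.
apply: (eq_by_back_half HvF HNF HnuF).
- apply: (triv_inj Hphi (f := mkhom n (n + n) (fun i => n + i))).
  by rewrite !(triv_restr_id Hphi) ?Hz ?Hz' ?Hw2 ?Hw2' //; homf_lia.
- move=> k Hk; apply: (triv_inj Hphi (f := mkhom 1 (n + n) (pt2 (n - k) (n + k)))).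
  by rewrite -!(triv_edge Hphi) ?Hz ?Hz' ?Hw3 ?Hw3' //; lia.
Qed.

Lemma inv_sandwich_total (x : X 1) :
  exists om : X 3, [/\ edge 1 2 om = x, edge 0 2 om = unit1 vX & edge 1 3 om = unit1 vX].
Proof.
have [R [R12 R02 R13]] := inv_sandwich HvB HNB HnuB (tau 1 x).
have [psi Hpsi] := Htriv _ R.
have [chi Hchi] : exists y, psi 1 y (mkhom 1 3 (pt2 1 2)) = x by apply: (triv_surj Hpsi); rewrite -R12.
have [c Hc] := triv_lift_unit vX Htau HvB Hpsi R02.
have [d Hd] := triv_lift_unit vX Htau HvB Hpsi R13.
have [RF [RF12 RF02 RF13]] := inv_sandwich HvF HNF HnuF chi.
have [Z1 [HZ1d HZ1]] := fibre_append Htau HvX HvB HNB Hpsi R13 Hd (isT : 1 <= 3) (leqnn 3) RF.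
have [Z2 [HZ2c HZ2]] := fibre_prepend Htau HvX HvB HNB Hpsi R02 Hc (isT : 0 <= 2) (isT : 2 <= 3) Z1.
pose Q := restr 3 (pt4 0 2 3 5) Z2.
have Q12 : edge 1 2 Q = chi.
  rewrite /Q edge_restr4 //=.
  rewrite -(@edge_restrE _ 4 _ (fun i => i.+1) 1 2 _ _ Z2) // ?HZ2; try homf_lia.
  by rewrite -RF12 -HZ1 edge_restr_id.
have Q02 : edge 0 2 Q = c.
  rewrite /Q edge_restr4 //= -(@edge_restr3 _ _ Z2 0 1 3 0 2) //.
  rewrite (edge_comp_unitr HvF HNF); first by rewrite edge_restr3 //= HZ2c.
  rewrite edge_restr3 //= -(@edge_restrE _ 4 _ (fun i => i.+1) 0 2 _ _ Z2) // ?HZ2; try homf_lia.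
  by rewrite -RF02 -HZ1 edge_restr_id.
have Q13 : edge 1 3 Q = d.
  rewrite /Q edge_restr4 //= -(@edge_restrE _ 4 _ (fun i => i.+1) 1 4 _ _ Z2) // ?HZ2; try homf_lia.
  rewrite -(@edge_restr3 _ _ Z1 1 3 4 0 2) //.
  rewrite (edge_comp_unitl HvF HNF); first by rewrite edge_restr3 //= HZ1d.
  by rewrite edge_restr3 //= -RF13 -HZ1 edge_restr_id.
exists (psi 3 Q (mkhom 3 3 id)).
by rewrite !(triv_edge Hpsi) // Q12 Q02 Q13.
Qed.

Lemma inv_witness_total_sym1 (a x : X 1) (w : X (1 + 1)) :
  inv_witness vX a x w -> exists w', inv_witness vX x a w'.
Proof.
move=> Hw; have [om [om12 om02 om13]] := inv_sandwich_total x.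
have om01 : edge 0 1 om = a.
  apply: (@inv_witness_total_uniq 1 _ _ x (restr 2 (pt3 0 1 2) om) w) => //.
  by apply: (inv_witness1 HvX); rewrite edge_restr3.
have E03 : edge 0 3 om = edge 0 1 om.
  by rewrite -(@edge_restr3 _ _ om 0 1 3 0 2) // (edge_comp_unitr HvX N_simplicial_total) ?edge_restr3.
have E03' : edge 0 3 om = edge 2 3 om.
  by rewrite -(@edge_restr3 _ _ om 0 2 3 0 2) // (edge_comp_unitl HvX N_simplicial_total) ?edge_restr3.
exists (restr 2 (pt3 1 2 3) om).
by apply: (inv_witness1 HvX); rewrite edge_restr3 //= -?E03' ?E03.
Qed.

Definition inv_total n (x : X n) : X n :=
  proj1_sig (constructive_indefinite_description _ (inv_witness_total x)).

Lemma inv_totalP n (x : X n) : exists w, inv_witness vX (inv_total x) x w.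
Proof. exact: proj2_sig (constructive_indefinite_description _ (inv_witness_total x)). Qed.

Lemma inv_totalE n (a x : X n) w : inv_witness vX a x w -> inv_total x = a.
Proof. by move=> Hw; have [w' Hw'] := inv_totalP x; exact: inv_witness_total_uniq Hw' Hw. Qed.

Lemma inv_total_op : is_smap_op (@inv_total).
Proof.
move=> m n f x; have [Hg ->] := hom_mkhom f; rewrite (revh_mkhom Hg).
have [w Hw] := inv_totalP x.
exact: inv_totalE (inv_witness_restr HvX N_simplicial_total Hg Hw).
Qed.

Lemma inv_totalK n (x : X n) : inv_total (inv_total x) = x.
Proof.
case: (posnP n) => [n0|Hn]; first by subst n; apply: etrans (HvX _) (esym (HvX _)).
have K1 (e : X 1) : inv_total (inv_total e) = e.
  have [w Hw] := inv_totalP e; have [w' Hw'] := inv_witness_total_sym1 Hw.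
  exact: inv_totalE Hw'.
apply: (eq_by_edges N_simplicial_total) => // i Hi.
rewrite !(smap_op_edge inv_total_op) ?K1; try lia.
by apply: edge_congr; lia.
Qed.

Lemma inversion_inv_total : is_inversion (@inv_total).
Proof.
split; [exact: inv_total_op | exact: inv_totalK |].
move=> n Hn x; have [w [Hw1 Hw2 Hw3]] := inv_totalP x; exists w; split.
- move=> i; rewrite !enum_opE /concat_edges; case: splitP => j Hj; rewrite enum_opE Hj.
  + by rewrite -Hw1 edge_restr_id //; have := ltn_ord j; lia.
  + by rewrite -Hw2 edge_restr_shift ?addnS //; have := ltn_ord j; lia.
- by exists vX; split=> //; rewrite prod_opE; have := Hw3 n (leqnn n); rewrite subnn.
Qed.

Lemma partial_group_total : partial_group X.
Proof.
split; [by exists vX | exact: N_simplicial_total | exists (@inv_total)].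
exact: inversion_inv_total.
Qed.

End TotalSpace.

Theorem theoremA (X B F : sSet) (tau : forall n, X n -> B n) :
  fibre_bundle F tau -> partial_group B -> partial_group F -> partial_group X.
Proof.
move=> [Htau _ Htriv] [[vB HvB] HNB [nuB HnuB]] [[vF HvF] HNF [nuF HnuF]].
have [vX HvX] := reduced_total Htriv HvB HvF.
exact (partial_group_total Htau Htriv HvB HNB HnuB HvF HNF HnuF HvX).
Qed.
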